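(* Let $\chi$ be a kernel as described in the context and let $f:\mathbb{R}^+\to\mathbb{R}$ be bounded and log-uniformly continuous. Then for every $w>0$ and every $x\in\mathbb{R}^+$, $$|(I_w^{\chi}f)(x)-f(x)|\le\big(M_0(\chi)+M_1(\chi)\big)\,\omega\!\left(f,\frac{1}{w}\right).$$
   Context: A kernel is a continuous function $\chi:\mathbb{R}^+\to\mathbb{R}$ satisfying: (i) $\sum_{k=-\infty}^{+\infty}\chi(e^{-k}u)=1$ for every $u\in\mathbb{R}^+$; (ii) $M_2(\chi)<+\infty$ and $\lim_{\gamma\to+\infty}\sum_{|k-\log u|>\gamma}|\chi(e^{-k}u)|\,|k-\log u|^2=0$ uniformly with respect to $u\in\mathbb{R}^+$. Absolute moments: $M_\nu(\chi,u)=\sum_{k\in\mathbb{Z}}|\chi(e^{-k}u)|\,|k-\log u|^\nu$, $M_\nu(\chi)=\sup_{u>0}M_\nu(\chi,u)$. For $w>0$, $x\in\mathbb{R}^+$: $(I_w^{\chi}f)(x)=\sum_{k\in\mathbb{Z}}\chi(e^{-k}x^w)\,w\int_{k/w}^{(k+1)/w}f(e^u)\,du$. A function $f$ is log-uniformly continuous if for every $\epsilon>0$ there is $\delta>0$ with $|f(u)-f(v)|<\epsilon$ whenever $|\log u-\log v|\le\delta$. The logarithmic modulus of continuity is $\omega(f,\delta)=\sup\{|f(x)-f(y)|: x,y\in\mathbb{R}^+,\ |\log x-\log y|\le\delta\}$ for $\delta>0$. *)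

From Stdlib Require Import Reals Lra Lia ZArith ClassicalEpsilon.
Open Scope R_scope.

Definition Zseries (a : Z -> R) (l : R) : Prop :=
  exists l1 l2,
    infinite_sum (fun n : nat => a (Z.of_nat n)) l1 /\
    infinite_sum (fun n : nat => a (- Z.of_nat n - 1)%Z) l2 /\
    l = l1 + l2.

Definition Zsum (a : Z -> R) : R :=
  epsilon (inhabits 0) (fun l => Zseries a l).

Definition Rsup (S : R -> Prop) : R :=
  epsilon (inhabits 0) (fun m => is_lub S m).

Definition Rint (g : R -> R) (a b : R) : R :=
  epsilon (inhabits 0)
    (fun I => exists pr : Riemann_integrable g a b, RiemannInt pr = I).

Definition moment_term (chi : R -> R) (nu : nat) (u : R) (k : Z) : R :=
  Rabs (chi (exp (- IZR k) * u)) * (Rabs (IZR k - ln u)) ^ nu.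

Definition M_u (chi : R -> R) (nu : nat) (u : R) : R :=
  Zsum (moment_term chi nu u).

Definition M (chi : R -> R) (nu : nat) : R :=
  Rsup (fun s => exists u, 0 < u /\ s = M_u chi nu u).

Definition M2_tail (chi : R -> R) (gamma u : R) : R :=
  Zsum (fun k => if Rlt_dec gamma (Rabs (IZR k - ln u))
                 then moment_term chi 2 u k else 0).

Definition is_kernel (chi : R -> R) : Prop :=
  (forall u, 0 < u -> continuity_pt chi u) /\
  (forall u, 0 < u -> Zseries (fun k => chi (exp (- IZR k) * u)) 1) /\
  (* M_2(chi) < +infinity *)
  (forall u, 0 < u -> exists s, Zseries (moment_term chi 2 u) s) /\
  (exists B, forall u, 0 < u -> M_u chi 2 u <= B) /\
  (forall eps, 0 < eps -> exists G, forall gamma, G < gamma ->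
     forall u, 0 < u -> Rabs (M2_tail chi gamma u) < eps).

Definition I_op (chi : R -> R) (w : R) (f : R -> R) (x : R) : R :=
  Zsum (fun k => chi (exp (- IZR k) * Rpower x w) *
                 (w * Rint (fun u => f (exp u)) (IZR k / w) ((IZR k + 1) / w))).

Definition log_unif_cont (f : R -> R) : Prop :=
  forall eps, 0 < eps -> exists delta, 0 < delta /\
    forall u v, 0 < u -> 0 < v -> Rabs (ln u - ln v) <= delta ->
      Rabs (f u - f v) < eps.

Definition bounded_pos (f : R -> R) : Prop :=
  exists B, forall x, 0 < x -> Rabs (f x) <= B.

Definition omega (f : R -> R) (delta : R) : R :=
  Rsup (fun s => exists x y, 0 < x /\ 0 < y /\ Rabs (ln x - ln y) <= delta /\
                             s = Rabs (f x - f y)).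

(* Put t_k = k - w ln x. On [k/w, (k+1)/w] one has |f(e^u) - f(x)| <= n omega(f, 1/w)
   whenever |w u - w ln x| <= n, and integrating this step bound over a unit interval
   gives at most (1 + |t_k|) omega(f, 1/w). Since the samples chi(e^-k x^w) sum to 1,
   summing these bounds against |chi(e^-k x^w)| yields (M_0 + M_1) omega(f, 1/w).
   The moments M_0, M_1 are finite: terms with |t_k| > 1 are dominated by those of M_2,
   and at most three k have |t_k| <= 1, where chi is bounded by continuity. *)

From Stdlib Require Import Reals Lra Lia ZArith ClassicalEpsilon.
From Coquelicot Require Import Coquelicot.
Open Scope R_scope.

Lemma Zsum_eq (a : Z -> R) (l : R) : Zseries a l -> Zsum a = l.
Proof.
  intros Ha. unfold Zsum.
  destruct (epsilon_spec (inhabits 0) (fun l => Zseries a l) (ex_intro _ l Ha))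
    as (p1 & p2 & Hp1 & Hp2 & ->).
  destruct Ha as (q1 & q2 & Hq1 & Hq2 & ->).
  now rewrite (uniqueness_sum _ _ _ Hp1 Hq1), (uniqueness_sum _ _ _ Hp2 Hq2).
Qed.

Lemma infinite_sum_plus (a b : nat -> R) (la lb : R) :
  infinite_sum a la -> infinite_sum b lb ->
  infinite_sum (fun n => a n + b n) (la + lb).
Proof.
  rewrite <- !is_series_Reals. apply (is_series_plus a b).
Qed.

Lemma infinite_sum_scal_r (a : nat -> R) (la c : R) :
  infinite_sum a la -> infinite_sum (fun n => a n * c) (la * c).
Proof.
  rewrite <- !is_series_Reals. intros Ha.
  apply (is_series_ext (fun n => c * a n)); [intros n; apply Rmult_comm|].
  rewrite Rmult_comm. exact (is_series_scal_l c a la Ha).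
Qed.

Lemma infinite_sum_ext (a b : nat -> R) (l : R) :
  (forall n, a n = b n) -> infinite_sum a l -> infinite_sum b l.
Proof.
  rewrite <- !is_series_Reals. apply is_series_ext.
Qed.

Lemma infinite_sum_dominated (a b : nat -> R) (lb : R) :
  (forall n, Rabs (a n) <= b n) -> infinite_sum b lb ->
  exists la, infinite_sum a la /\ Rabs la <= lb.
Proof.
  rewrite <- is_series_Reals. intros Hab Hb.
  assert (Hex : ex_series b) by (exists lb; exact Hb).
  assert (Habs : ex_series (fun n => Rabs (a n))).
  { apply (ex_series_le (V := R_CompleteNormedModule) _ b); [|exact Hex].
    intros n. change (Rabs (Rabs (a n)) <= b n). rewrite Rabs_Rabsolu. apply Hab. }
  destruct (ex_series_le (V := R_CompleteNormedModule) a b Hab Hex) as [la Hla].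
  exists la. split; [now apply is_series_Reals|].
  rewrite <- (is_series_unique _ _ Hla), <- (is_series_unique _ _ Hb).
  eapply Rle_trans; [exact (Series_Rabs a Habs)|].
  apply Series_le; [|exact Hex].
  intros n. split; [apply Rabs_pos | apply Hab].
Qed.

Lemma Zseries_plus (a b : Z -> R) (la lb : R) :
  Zseries a la -> Zseries b lb -> Zseries (fun k => a k + b k) (la + lb).
Proof.
  intros (a1 & a2 & Ha1 & Ha2 & ->) (b1 & b2 & Hb1 & Hb2 & ->).
  exists (a1 + b1), (a2 + b2).
  split; [|split]; [now apply infinite_sum_plus .. | ring].
Qed.

Lemma Zseries_scal_r (a : Z -> R) (la c : R) :
  Zseries a la -> Zseries (fun k => a k * c) (la * c).
Proof.
  intros (a1 & a2 & Ha1 & Ha2 & ->). exists (a1 * c), (a2 * c).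
  split; [|split]; [now apply infinite_sum_scal_r .. | ring].
Qed.

Lemma Zseries_ext (a b : Z -> R) (l : R) :
  (forall k, a k = b k) -> Zseries a l -> Zseries b l.
Proof.
  intros Hab (a1 & a2 & Ha1 & Ha2 & ->). exists a1, a2.
  split; [|split]; [eapply infinite_sum_ext; [intros n; apply Hab | assumption] .. | reflexivity].
Qed.

Lemma Zseries_dominated (a b : Z -> R) (lb : R) :
  (forall k, Rabs (a k) <= b k) -> Zseries b lb ->
  exists la, Zseries a la /\ Rabs la <= lb.
Proof.
  intros Hab (b1 & b2 & Hb1 & Hb2 & ->).
  destruct (infinite_sum_dominated (fun n => a (Z.of_nat n)) _ _ (fun n => Hab _) Hb1)
    as (a1 & Ha1 & Hle1).
  destruct (infinite_sum_dominated (fun n => a (- Z.of_nat n - 1)%Z) _ _ (fun n => Hab _) Hb2)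
    as (a2 & Ha2 & Hle2).
  exists (a1 + a2). split; [now exists a1, a2|].
  pose proof (Rabs_triang a1 a2). lra.
Qed.

Lemma infinite_sum_nonneg_bounded (a : nat -> R) (K : R) :
  (forall n, 0 <= a n) -> (forall N, sum_f_R0 a N <= K) ->
  exists l, infinite_sum a l /\ l <= K.
Proof.
  intros Ha HK.
  assert (Hg : Un_growing (sum_f_R0 a)) by (intros n; simpl; specialize (Ha (S n)); lra).
  destruct (growing_cv _ Hg) as [l Hl]; [exists K; intros _ [N ->]; apply HK|].
  exists l. split; [exact Hl|].
  apply (Rle_cv_lim (Vn := fun _ => K) HK Hl).
  intros eps Heps. exists 0%nat. intros. unfold R_dist. rewrite Rminus_diag, Rabs_R0. lra.
Qed.

Lemma infinite_sum_nonneg_partial (a : nat -> R) (l : R) :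
  (forall n, 0 <= a n) -> infinite_sum a l -> forall N, sum_f_R0 a N <= l.
Proof.
  intros Ha Hl. apply growing_ineq; [|exact Hl].
  intros n. simpl. specialize (Ha (S n)). lra.
Qed.

Lemma sum_f_R0_telescope (phi : nat -> R) (N : nat) :
  sum_f_R0 (fun n => phi n - phi (S n)) N = phi 0%nat - phi (S N).
Proof. induction N as [|N IH]; simpl; [|rewrite IH]; ring. Qed.

Lemma infinite_sum_telescoping_bound (a b phi : nat -> R) (lb c : R) :
  (forall n, 0 <= a n) -> (forall n, 0 <= b n) -> infinite_sum b lb ->
  (forall n, 0 <= phi n <= c) -> (forall n, a n <= b n + (phi n - phi (S n))) ->
  exists l, infinite_sum a l /\ l <= lb + c.
Proof.
  intros Ha Hb Hlb Hphi Hab. apply infinite_sum_nonneg_bounded; [exact Ha|].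
  intros N.
  apply Rle_trans with (sum_f_R0 (fun n => b n + (phi n - phi (S n))) N).
  { apply sum_Rle. intros n _. apply Hab. }
  rewrite sum_plus, sum_f_R0_telescope.
  pose proof (infinite_sum_nonneg_partial b lb Hb Hlb N).
  pose proof (Hphi 0%nat). pose proof (Hphi (S N)). lra.
Qed.

Lemma Zseries_telescoping_bound (a b phi : Z -> R) (lb c : R) :
  (forall k, 0 <= a k) -> (forall k, 0 <= b k) -> Zseries b lb ->
  (forall k, 0 <= phi k <= c) -> (forall k, a k <= b k + (phi k - phi (k + 1)%Z)) ->
  exists l, Zseries a l /\ l <= lb + 2 * c.
Proof.
  intros Ha Hb (b1 & b2 & Hb1 & Hb2 & ->) Hphi Hab.
  destruct (infinite_sum_telescoping_bound (fun n => a (Z.of_nat n)) (fun n => b (Z.of_nat n))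
              (fun n => phi (Z.of_nat n)) b1 c) as (a1 & Ha1 & Hle1); auto.
  { intros n. rewrite Nat2Z.inj_succ. apply Hab. }
  (* on the negative half-line the increments telescope the other way *)
  destruct (infinite_sum_telescoping_bound (fun n => a (- Z.of_nat n - 1)%Z)
              (fun n => b (- Z.of_nat n - 1)%Z) (fun n => c - phi (- Z.of_nat n)%Z) b2 c)
    as (a2 & Ha2 & Hle2); auto.
  { intros n. specialize (Hphi (- Z.of_nat n)%Z). lra. }
  { intros n. rewrite Nat2Z.inj_succ.
    specialize (Hab (- Z.of_nat n - 1)%Z).
    replace (- Z.of_nat n - 1 + 1)%Z with (- Z.of_nat n)%Z in Hab by lia.
    replace (- Z.succ (Z.of_nat n))%Z with (- Z.of_nat n - 1)%Z by lia. lra. }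
  exists (a1 + a2). split; [now exists a1, a2 | lra].
Qed.

Lemma Rsup_upper_bound (S : R -> Prop) (x : R) :
  (exists m, forall y, S y -> y <= m) -> S x -> x <= Rsup S.
Proof.
  intros [m Hm] Hx. unfold Rsup.
  destruct (completeness S) as [s Hs]; [now exists m | now exists x |].
  destruct (epsilon_spec (inhabits 0) (fun s => is_lub S s) (ex_intro _ s Hs)) as [Hub _].
  now apply Hub.
Qed.

Lemma Rabs_sub_le_omega (f : R -> R) (d p q : R) :
  bounded_pos f -> 0 < p -> 0 < q -> Rabs (ln p - ln q) <= d ->
  Rabs (f p - f q) <= omega f d.
Proof.
  intros [B HB] Hp Hq Hd. apply Rsup_upper_bound; [|now exists p, q].
  exists (2 * B). intros s (y & z & Hy & Hz & _ & ->).
  pose proof (HB y Hy). pose proof (HB z Hz). pose proof (Rabs_triang (f y) (- f z)).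
  rewrite Rabs_Ropp in *. unfold Rminus. lra.
Qed.

Lemma omega_nonneg (f : R -> R) (d : R) : bounded_pos f -> 0 <= d -> 0 <= omega f d.
Proof.
  intros Hf Hd. apply Rle_trans with (Rabs (f 1 - f 1)); [apply Rabs_pos|].
  apply Rabs_sub_le_omega; [exact Hf | lra | lra |].
  now rewrite Rminus_diag, Rabs_R0.
Qed.

(* Induction on [n], through the point splitting [ln q, ln p] in ratio [n : 1]. *)
Lemma Rabs_sub_le_mult_omega (f : R -> R) (d : R) (n : nat) (p q : R) :
  bounded_pos f -> 0 < p -> 0 < q -> Rabs (ln p - ln q) <= INR n * d ->
  Rabs (f p - f q) <= INR n * omega f d.
Proof.
  intros Hf. revert p q. induction n as [|n IH]; intros p q Hp Hq Hpq.
  - simpl in *. rewrite Rmult_0_l in *.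
    assert (Hln : ln p = ln q).
    { pose proof (Rabs_pos (ln p - ln q)). apply Rminus_diag_uniq, Rabs_eq_0. lra. }
    apply ln_inv in Hln; [|exact Hp|exact Hq]. subst. rewrite Rminus_diag, Rabs_R0. lra.
  - rewrite S_INR in *. pose proof (pos_INR n).
    set (e := (ln p - ln q) / (INR n + 1)).
    assert (He : Rabs e <= d).
    { unfold e. rewrite Rabs_div, (Rabs_right (INR n + 1)) by lra.
      apply Rmult_le_reg_r with (INR n + 1); [lra|].
      unfold Rdiv. rewrite Rmult_assoc, Rinv_l by lra. lra. }
    set (r := exp (ln q + INR n * e)).
    assert (Hr : ln r = ln q + INR n * e) by apply ln_exp.
    assert (Hpr : Rabs (f p - f r) <= omega f d).
    { apply Rabs_sub_le_omega; [exact Hf | exact Hp | apply exp_pos |].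
      rewrite Hr. replace (ln p - (ln q + INR n * e)) with e; [exact He|].
      unfold e. field. lra. }
    assert (Hrq : Rabs (f r - f q) <= INR n * omega f d).
    { apply IH; [apply exp_pos | exact Hq |].
      rewrite Hr, Rplus_minus_swap, Rminus_diag, Rplus_0_l, Rabs_mult, (Rabs_right (INR n)) by lra.
      apply Rmult_le_compat_l; assumption. }
    replace (f p - f q) with ((f p - f r) + (f r - f q)) by ring.
    pose proof (Rabs_triang (f p - f r) (f r - f q)). lra.
Qed.

Lemma RInt_rescale (h : R -> R) (w a b : R) :
  0 < w -> ex_RInt h (a / w) (b / w) ->
  w * RInt h (a / w) (b / w) = RInt (fun t => h (t / w)) a b.
Proof.
  intros Hw Hh.
  assert (Hlin : forall t, / w * t + 0 = t / w) by (intros; unfold Rdiv; ring).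
  change (scal w (RInt h (a / w) (b / w)) = RInt (fun t => h (t / w)) a b).
  rewrite <- (RInt_scal (V := R_CompleteNormedModule) h _ _ w Hh).
  rewrite <- !Hlin, <- RInt_comp_lin.
  - apply RInt_ext. intros t _. rewrite Hlin.
    unfold scal; simpl; unfold mult; simpl. field. lra.
  - rewrite !Hlin. now apply (ex_RInt_scal (V := R_CompleteNormedModule)).
Qed.

Lemma RInt_split_abs_le (phi : R -> R) (a m b p q : R) :
  a <= m <= b -> ex_RInt phi a m -> ex_RInt phi m b ->
  (forall t, a <= t <= m -> Rabs (phi t) <= p) ->
  (forall t, m <= t <= b -> Rabs (phi t) <= q) ->
  Rabs (RInt phi a b) <= (m - a) * p + (b - m) * q.
Proof.
  intros [Ham Hmb] Hl Hr Hp Hq.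
  rewrite <- (RInt_Chasles (V := R_CompleteNormedModule) phi a m b Hl Hr).
  pose proof (abs_RInt_le_const phi a m p Ham Hl Hp).
  pose proof (abs_RInt_le_const phi m b q Hmb Hr Hq).
  pose proof (Rabs_triang (RInt phi a m) (RInt phi m b)).
  change (plus (RInt phi a m) (RInt phi m b)) with (RInt phi a m + RInt phi m b). lra.
Qed.

Lemma nat_ceil_ex (r : R) : 0 <= r -> exists n : nat, r < INR n <= r + 1.
Proof.
  intros Hr. destruct (nfloor_ex r Hr) as [n Hn].
  exists (S n). rewrite S_INR. lra.
Qed.

(* The proof splits [s, s+1] at an integer distance from [a], where the bound
   on [phi] jumps; both pieces together contribute at most [|s - a| + 1]. *)
Lemma RInt_unit_abs_le (phi : R -> R) (a c s : R) :
  (forall t, continuous phi t) ->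
  (forall (n : nat) t, Rabs (t - a) <= INR n -> Rabs (phi t) <= INR n * c) ->
  Rabs (RInt phi s (s + 1)) <= (1 + Rabs (s - a)) * c.
Proof.
  intros Hcont Hphi.
  assert (Hint : forall u v, ex_RInt phi u v)
    by (intros; apply (ex_RInt_continuous (V := R_CompleteNormedModule)); auto).
  assert (Hc : 0 <= c).
  { specialize (Hphi 1%nat a). simpl in Hphi. rewrite Rminus_diag, Rabs_R0 in Hphi.
    pose proof (Rabs_pos (phi a)). lra. }
  assert (Hn : forall (n : nat) t, - INR n <= t - a <= INR n -> Rabs (phi t) <= INR n * c)
    by (intros n t Ht; apply Hphi, Rabs_le, Ht).
  destruct (Rle_or_lt 0 (s - a)) as [Hpos|Hneg].
  - destruct (nat_ceil_ex (s - a) Hpos) as [n Hceil].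
    eapply Rle_trans.
    + apply (RInt_split_abs_le phi s (a + INR n) (s + 1) (INR n * c) (INR (S n) * c));
        try apply Hint; [lra | intros t Ht; apply Hn; lra |].
      intros t Ht. apply Hn. rewrite S_INR. lra.
    + rewrite S_INR, Rabs_right by lra. nra.
  - destruct (Rle_or_lt (s - a) (-1)) as [Hfar|Hnear].
    + destruct (nat_ceil_ex (a - s - 1) ltac:(lra)) as [n Hceil].
      eapply Rle_trans.
      * apply (RInt_split_abs_le phi s (a - INR n) (s + 1) (INR (S n) * c) (INR n * c));
          try apply Hint; [lra | | intros t Ht; apply Hn; lra].
        intros t Ht. apply Hn. rewrite S_INR. lra.
      * rewrite S_INR, Rabs_left by lra. nra.
    + eapply Rle_trans.
      * apply (abs_RInt_le_const phi s (s + 1) (INR 1 * c)); [lra | apply Hint |].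
        intros t Ht. apply Hn. simpl. lra.
      * simpl. pose proof (Rabs_pos (s - a)). nra.
Qed.

Lemma continuous_exp_comp (f : R -> R) :
  log_unif_cont f -> forall u, continuous (fun u => f (exp u)) u.
Proof.
  intros Hf u. apply continuity_pt_filterlim.
  intros eps Heps. destruct (Hf eps Heps) as (d & Hd & Hfd).
  exists d. split; [exact Hd|]. intros y [_ Hy]. simpl in *. unfold R_dist in *.
  apply Hfd; try apply exp_pos. rewrite !ln_exp. lra.
Qed.

Lemma Rint_exp_comp (f : R -> R) (a b : R) :
  log_unif_cont f -> Rint (fun u => f (exp u)) a b = RInt (fun u => f (exp u)) a b.
Proof.
  intros Hf.
  assert (Hex : ex_RInt (fun u => f (exp u)) a b).
  { apply (ex_RInt_continuous (V := R_CompleteNormedModule)).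
    intros; now apply continuous_exp_comp. }
  unfold Rint.
  destruct (epsilon_spec (inhabits 0)
     (fun I => exists pr : Riemann_integrable (fun u => f (exp u)) a b, RiemannInt pr = I)
     (ex_intro _ _ (ex_intro _ (ex_RInt_Reals_0 _ _ _ Hex) eq_refl))) as [pr <-].
  symmetry. apply RInt_Reals.
Qed.

Lemma sampling_average_sub_le (f : R -> R) (w x : R) (k : Z) :
  bounded_pos f -> log_unif_cont f -> 0 < w -> 0 < x ->
  Rabs (w * Rint (fun u => f (exp u)) (IZR k / w) ((IZR k + 1) / w) - f x)
    <= (1 + Rabs (IZR k - w * ln x)) * omega f (1 / w).
Proof.
  intros Hb Hf Hw Hx.
  set (phi := fun t => f (exp (t / w)) - f x).
  assert (Hres : forall t, continuous (fun t => f (exp (t / w))) t).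
  { intros t. apply (continuous_comp (fun t => t / w) (fun u => f (exp u)));
      [|now apply continuous_exp_comp].
    apply (continuous_mult (fun t => t) (fun _ => / w));
      [apply continuous_id | apply continuous_const]. }
  assert (Hcont : forall t, continuous phi t).
  { intros t. apply (continuous_minus (fun t => f (exp (t / w))) (fun _ => f x));
      [apply Hres | apply continuous_const]. }
  assert (Havg : w * Rint (fun u => f (exp u)) (IZR k / w) ((IZR k + 1) / w) - f x
                 = RInt phi (IZR k) (IZR k + 1)).
  { rewrite Rint_exp_comp, RInt_rescale by
      (try apply (ex_RInt_continuous (V := R_CompleteNormedModule));
       auto using continuous_exp_comp).
    unfold phi. rewrite (RInt_minus (V := R_CompleteNormedModule)).
    - rewrite RInt_const. unfold minus, plus, opp, scal; simpl; unfold mult; simpl. ring.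
    - apply (ex_RInt_continuous (V := R_CompleteNormedModule)). auto.
    - apply ex_RInt_const. }
  rewrite Havg. apply RInt_unit_abs_le; [exact Hcont|].
  intros n t Ht. unfold phi. apply Rabs_sub_le_mult_omega; [exact Hb | apply exp_pos | exact Hx |].
  rewrite ln_exp. replace (t / w - ln x) with ((t - w * ln x) * (1 / w)) by (field; lra).
  rewrite Rabs_mult, (Rabs_right (1 / w)) by (apply Rle_ge, Rlt_le, Rdiv_lt_0_compat; lra).
  apply Rmult_le_compat_r; [apply Rlt_le, Rdiv_lt_0_compat; lra | exact Ht].
Qed.

(* [ramp c] falls from 3 to 0 across [c - 1, c + 2]: its unit decrements are
   nonnegative, equal to 1 within distance 1 of [c], and sum to at most 3. *)
Definition ramp (c y : R) : R := Rmin 3 (Rmax 0 (c + 2 - y)).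

Lemma ramp_bounds (c y : R) : 0 <= ramp c y <= 3.
Proof. unfold ramp, Rmin, Rmax. repeat destruct Rle_dec; lra. Qed.

Lemma ramp_antitone (c y y' : R) : y <= y' -> ramp c y' <= ramp c y.
Proof. intros. unfold ramp, Rmin, Rmax. repeat destruct Rle_dec; lra. Qed.

Lemma ramp_step_near (c y : R) : Rabs (y - c) <= 1 -> ramp c y - ramp c (y + 1) = 1.
Proof.
  intros H. apply Rabs_le_between in H. unfold ramp, Rmin, Rmax. repeat destruct Rle_dec; lra.
Qed.

Lemma moment_term_nonneg (chi : R -> R) (nu : nat) (u : R) (k : Z) :
  0 <= moment_term chi nu u k.
Proof. apply Rmult_le_pos; [apply Rabs_pos | apply pow_le, Rabs_pos]. Qed.

Lemma kernel_bounded_near_one (chi : R -> R) :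
  is_kernel chi -> exists C, 0 <= C /\ forall v, exp (-1) <= v <= exp 1 -> Rabs (chi v) <= C.
Proof.
  intros [Hcont _].
  assert (Hle : exp (-1) <= exp 1) by (apply Rlt_le, exp_increasing; lra).
  destruct (continuity_ab_maj (fun v => Rabs (chi v)) _ _ Hle) as (v0 & Hv0 & _).
  - intros v Hv. apply (continuity_pt_comp chi Rabs); [|apply Rcontinuity_abs].
    apply Hcont. pose proof (exp_pos (-1)). lra.
  - exists (Rabs (chi v0)). split; [apply Rabs_pos | exact Hv0].
Qed.

Lemma moment_term_le_ramp (chi : R -> R) (nu : nat) (C u : R) (k : Z) :
  (nu <= 2)%nat -> 0 <= C -> (forall v, exp (-1) <= v <= exp 1 -> Rabs (chi v) <= C) ->
  0 < u ->
  moment_term chi nu u k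
    <= moment_term chi 2 u k + C * (ramp (ln u) (IZR k) - ramp (ln u) (IZR k + 1)).
Proof.
  intros Hnu HC0 HC Hu. unfold moment_term.
  set (t := IZR k - ln u).
  assert (Harg : exp (- IZR k) * u = exp (- t)).
  { unfold t. rewrite <- (exp_ln u) at 1 by exact Hu. rewrite <- exp_plus. f_equal; ring. }
  rewrite Harg. set (A := Rabs (chi (exp (- t)))).
  assert (HA : 0 <= A) by apply Rabs_pos.
  assert (Hm2 : 0 <= A * Rabs t ^ 2) by (apply Rmult_le_pos; [exact HA | apply pow_le, Rabs_pos]).
  destruct (Rle_or_lt (Rabs t) 1) as [Hnear|Hfar].
  - rewrite ramp_step_near by exact Hnear.
    assert (HAC : A <= C).
    { assert (Hexp : forall a b, a <= b -> exp a <= exp b).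
      { intros a b [Hab | ->]; [now apply Rlt_le, exp_increasing | apply Rle_refl]. }
      apply HC. apply Rabs_le_between in Hnear. split; apply Hexp; lra. }
    assert (Hpow : Rabs t ^ nu <= 1).
    { rewrite <- (pow1 nu). apply pow_incr. split; [apply Rabs_pos | exact Hnear]. }
    assert (A * Rabs t ^ nu <= A * 1) by (apply Rmult_le_compat_l; assumption). lra.
  - assert (Hpow : Rabs t ^ nu <= Rabs t ^ 2) by (apply Rle_pow; [lra | exact Hnu]).
    pose proof (ramp_antitone (ln u) (IZR k) (IZR k + 1) ltac:(lra)).
    assert (A * Rabs t ^ nu <= A * Rabs t ^ 2) by (apply Rmult_le_compat_l; assumption).
    assert (0 <= C * (ramp (ln u) (IZR k) - ramp (ln u) (IZR k + 1)))
      by (apply Rmult_le_pos; lra).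
    lra.
Qed.

Lemma kernel_moment_series (chi : R -> R) (nu : nat) :
  is_kernel chi -> (nu <= 2)%nat -> exists K, forall u, 0 < u ->
    Zseries (moment_term chi nu u) (M_u chi nu u) /\ M_u chi nu u <= K.
Proof.
  intros Hk Hnu. destruct (kernel_bounded_near_one chi Hk) as (C & HC0 & HC).
  destruct Hk as (_ & _ & Hm2 & [B HB] & _).
  exists (B + 2 * (3 * C)). intros u Hu.
  destruct (Hm2 u Hu) as [s Hs].
  assert (HsB : s <= B) by (rewrite <- (Zsum_eq _ _ Hs); apply HB, Hu).
  destruct (Zseries_telescoping_bound (moment_term chi nu u) (moment_term chi 2 u)
              (fun k => C * ramp (ln u) (IZR k)) s (3 * C)) as (l & Hl & Hls).
  - intros k. apply moment_term_nonneg.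
  - intros k. apply moment_term_nonneg.
  - exact Hs.
  - intros k. pose proof (ramp_bounds (ln u) (IZR k)). split; nra.
  - intros k. rewrite plus_IZR, <- Rmult_minus_distr_l. now apply moment_term_le_ramp.
  - unfold M_u. rewrite (Zsum_eq _ _ Hl). split; [exact Hl | lra].
Qed.

Lemma M_u_le_M (chi : R -> R) (nu : nat) (u : R) :
  is_kernel chi -> (nu <= 2)%nat -> 0 < u -> M_u chi nu u <= M chi nu.
Proof.
  intros Hk Hnu Hu. destruct (kernel_moment_series chi nu Hk Hnu) as [K HK].
  apply Rsup_upper_bound; [|now exists u].
  exists K. intros s (v & Hv & ->). apply HK, Hv.
Qed.

Theorem theorem3 (chi f : R -> R) :
  is_kernel chi -> bounded_pos f -> log_unif_cont f ->
  forall w x, 0 < w -> 0 < x ->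
    Rabs (I_op chi w f x - f x) <= (M chi 0 + M chi 1) * omega f (1 / w).
Proof.
  intros Hk Hb Hf w x Hw Hx.
  set (X := Rpower x w).
  assert (HX : 0 < X) by apply exp_pos.
  assert (HlnX : ln X = w * ln x) by apply ln_exp.
  destruct (kernel_moment_series chi 0 Hk ltac:(lia)) as [K0 HK0].
  destruct (kernel_moment_series chi 1 Hk ltac:(lia)) as [K1 HK1].
  destruct (HK0 X HX) as [Hm0 _], (HK1 X HX) as [Hm1 _].
  set (om := omega f (1 / w)).
  set (avg := fun k => w * Rint (fun u => f (exp u)) (IZR k / w) ((IZR k + 1) / w)).
  set (dev := fun k => chi (exp (- IZR k) * X) * (avg k - f x)).
  assert (Hdev : forall k, Rabs (dev k) <= (moment_term chi 0 X k + moment_term chi 1 X k) * om).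
  { intros k. unfold dev, moment_term. rewrite Rabs_mult, HlnX. simpl pow.
    replace (_ * om) with (Rabs (chi (exp (- IZR k) * X)) * ((1 + Rabs (IZR k - w * ln x)) * om))
      by ring.
    apply Rmult_le_compat_l; [apply Rabs_pos | now apply sampling_average_sub_le]. }
  destruct (Zseries_dominated dev _ _ Hdev (Zseries_scal_r _ _ om (Zseries_plus _ _ _ _ Hm0 Hm1)))
    as (D & HD & HDle).
  assert (HI : I_op chi w f x = D + 1 * f x).
  { destruct Hk as (_ & Hunity & _). apply Zsum_eq.
    apply (Zseries_ext (fun k => dev k + chi (exp (- IZR k) * X) * f x));
      [intros k; unfold dev, avg, X; ring|].
    apply Zseries_plus; [exact HD | apply Zseries_scal_r, Hunity, HX]. }
  rewrite HI, Rmult_1_l, Rplus_minus_r. eapply Rle_trans; [exact HDle|].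
  apply Rmult_le_compat_r; [apply omega_nonneg; [exact Hb | apply Rlt_le, Rdiv_lt_0_compat; lra]|].
  apply Rplus_le_compat; apply M_u_le_M; auto.
Qed.
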